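(* For any integers $k \geq r \geq 2$, the optimization problem Two-Class $(r,k)$-Coloring is in APX; in fact, there is a polynomial-time algorithm that, on every input graph $G$, returns a feasible solution covering at least half of the optimum number of covered edges.
   Context: Let $G=(V,E)$ be a finite simple undirected graph. A $k$-coloring is a map from $V$ to a set of $k$ colors; an edge is covered if its endpoints receive different colors. In Two-Class $(r,k)$-Coloring, the $k$ colors are divided into $r$ relaxed colors and $k-r$ proper colors; a feasible solution is a $k$-coloring in which each proper color class is an independent set, and the optimization problem asks to maximize the number of covered edges. APX is the class of NP optimization problems admitting a polynomial-time constant-factor approximation algorithm. *)

From mathcomp Require Import all_boot.
Set Implicit Arguments. Unset Strict Implicit. Unset Printing Implicit Defensive.

Definition simple_graph (T : finType) (e : rel T) : Prop :=
  symmetric e /\ irreflexive e.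

(* Colors are the naturals 0..k-1; colors c < r are the r relaxed colors,
   colors r <= c < k are the k - r proper colors. *)

Definition feasible (T : finType) (e : rel T) (r : nat) (f : T -> nat) : bool :=
  [forall u, forall v, e u v ==> (f u == f v) ==> (f u < r)].

Definition covered_edges (T : finType) (e : rel T) (f : T -> nat) : {set {set T}} :=
  [set A : {set T} | [exists u, exists v,
      [&& A == [set u; v], e u v & f u != f v]]].

Definition ncovered (T : finType) (e : rel T) (f : T -> nat) : nat :=
  #|covered_edges e f|.

Definition opt_cover (T : finType) (e : rel T) (r k : nat) : nat :=
  \max_(f : {ffun T -> 'I_k} | feasible e r (fun v => val (f v)))
     ncovered e (fun v => val (f v)).

(* The explicit polynomial-time (O(|V|^2)) greedy algorithm: scan vertices in
   order; give the current vertex relaxed color 1 if strictly more of its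
   already-colored neighbours have color 0 than color 1, else color 0. *)
Fixpoint greedy_aux (T : eqType) (e : rel T) (acc : seq (T * nat)) (s : seq T)
    : seq (T * nat) :=
  match s with
  | [::] => acc
  | v :: s' =>
      let n0 := count (fun p => e v p.1 && (p.2 == 0)) acc in
      let n1 := count (fun p => e v p.1 && (p.2 == 1)) acc in
      greedy_aux e ((v, if n1 < n0 then 1 else 0) :: acc) s'
  end.

Definition greedy_coloring (T : finType) (e : rel T) : T -> nat :=
  let acc := greedy_aux e [::] (enum T) in
  fun v => nth 0 (unzip2 acc) (index v (unzip1 acc)).

(* The greedy coloring only uses the colors 0 and 1, which are relaxed since
   r >= 2, so it is feasible. Each vertex gets the color held by at most half of
   its already colored neighbours, so at least half of the edges to earlier
   neighbours are covered. Counting every edge at its later endpoint, the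
   greedy coloring covers at least half of all edges, while any coloring covers
   at most all of them. *)

From mathcomp Require Import all_boot.
Set Implicit Arguments. Unset Strict Implicit. Unset Printing Implicit Defensive.

Lemma take_uniq_filter (T : eqType) (s : seq T) n :
  uniq s -> take n s = [seq x <- s | index x s < n].
Proof.
elim: s n => [|x s IH] [|n] //= /andP [xs us].
  by symmetry; rewrite (@eq_filter _ _ pred0) ?filter_pred0.
rewrite eqxx IH //; congr (_ :: _); apply: eq_in_filter => y ys.
by rewrite ifN // eq_sym (memPn xs).
Qed.

Section GreedyOnSequences.

Variables (T : eqType) (e : rel T).

Definition color_of (acc : seq (T * nat)) (v : T) : nat :=
  nth 0 (unzip2 acc) (index v (unzip1 acc)).

Definition minority_color (n0 n1 : nat) : nat := if n1 < n0 then 1 else 0.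

Definition nbr_count (acc : seq (T * nat)) (v : T) (b : nat) : nat :=
  count (fun p => e v p.1 && (p.2 == b)) acc.

Definition greedy_step (acc : seq (T * nat)) (v : T) : seq (T * nat) :=
  (v, minority_color (nbr_count acc v 0) (nbr_count acc v 1)) :: acc.

Definition greedy_colors (s : seq T) : T -> nat :=
  color_of (foldl greedy_step [::] s).

Lemma greedy_auxE acc s : greedy_aux e acc s = foldl greedy_step acc s.
Proof. by elim: s acc => //= v s IH acc; rewrite IH. Qed.

Lemma color_of_cons p acc v :
  color_of (p :: acc) v = if p.1 == v then p.2 else color_of acc v.
Proof. by rewrite /color_of /=; case: eqP. Qed.

Lemma count_color_of (P : T -> nat -> bool) acc :
  uniq (unzip1 acc) ->
  count (fun p => P p.1 p.2) acc =
  count (fun u => P u (color_of acc u)) (unzip1 acc).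
Proof.
elim: acc => //= p acc IH /andP [p_acc u_acc].
rewrite color_of_cons eqxx IH //; congr (_ + _).
apply: eq_in_count => u /(memPn p_acc) p_u.
by rewrite color_of_cons eq_sym (negbTE p_u).
Qed.

Lemma unzip1_greedy s : unzip1 (foldl greedy_step [::] s) = rev s.
Proof. by elim/last_ind: s => //= s v IH; rewrite foldl_rcons rev_rcons /= IH. Qed.

Lemma greedy_colorsE s v : uniq s -> v \in s ->
  let c := greedy_colors s in let earlier := take (index v s) s in
  c v = minority_color (count (fun u => e v u && (c u == 0)) earlier)
                       (count (fun u => e v u && (c u == 1)) earlier).
Proof.
elim/last_ind: s v => //= s x IH v; rewrite rcons_uniq => /andP [x_s u_s].
set c := greedy_colors (rcons s x).
have c_old u : u \in s -> c u = greedy_colors s u.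
  move=> u_in; rewrite /c /greedy_colors foldl_rcons /= color_of_cons /=.
  by rewrite ifN //; apply: contraNneq x_s => ->.
have count_old b (s' : seq T) w : {subset s' <= s} ->
    count (fun u => e w u && (greedy_colors s u == b)) s' =
    count (fun u => e w u && (c u == b)) s'.
  by move=> sub; apply: eq_in_count => u /sub u_in; rewrite c_old.
rewrite mem_rcons in_cons => /predU1P [-> | v_s].
  rewrite -cats1 index_cat ifN //= eqxx addn0 take_size_cat // -!count_old //.
  rewrite /c /greedy_colors foldl_rcons /= color_of_cons eqxx /= /nbr_count.
  have keys := unzip1_greedy s.
  have u_keys : uniq (unzip1 (foldl greedy_step [::] s)) by rewrite keys rev_uniq.
  by rewrite !(count_color_of (fun u c => e x u && (c == _))) // keys !count_rev.
rewrite c_old // IH // -cats1 index_cat v_s takel_cat ?index_size //.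
by rewrite -!count_old //; apply: mem_take.
Qed.

End GreedyOnSequences.

Section EarlierNeighbours.

Variables (T : finType) (e : rel T).

(* The order in which [greedy_coloring] scans the vertices. *)
Definition before (u v : T) : bool := index u (enum T) < index v (enum T).

Definition earlier_nbrs (v : T) : {set T} := [set u | before u v & e v u].

Lemma before_irr u : before u u = false.
Proof. exact: ltnn. Qed.

Lemma before_asym u v : before u v -> before v u = false.
Proof. by move=> uv; apply/negbTE; rewrite -leqNgt ltnW. Qed.

Lemma before_total u v : u != v -> before u v || before v u.
Proof.
move=> neq_uv; rewrite /before -neq_ltn; apply: contra neq_uv => /eqP eq_idx.
by apply/eqP; apply: (index_inj u (s := enum T)); rewrite ?mem_enum.
Qed.

Lemma count_earlier (P : pred T) v :
  count P (take (index v (enum T)) (enum T)) = #|[set u | before u v & P u]|.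
Proof.
rewrite take_uniq_filter ?enum_uniq // count_filter -sum1_count big_enum_cond.
by rewrite sum1dep_card; apply: eq_card => u; rewrite !inE /= andbC.
Qed.

Local Notation g := (greedy_coloring e).

Lemma greedy_coloring_colors : g = greedy_colors e (enum T).
Proof. by rewrite /greedy_coloring greedy_auxE. Qed.

Lemma greedy_coloringE v :
  g v = minority_color #|[set u in earlier_nbrs v | g u == 0]|
                       #|[set u in earlier_nbrs v | g u == 1]|.
Proof.
rewrite greedy_coloring_colors greedy_colorsE ?enum_uniq ?mem_enum //= !count_earlier.
by congr minority_color; apply: eq_card => u; rewrite !inE andbA.
Qed.

Lemma greedy_coloring_le1 v : g v <= 1.
Proof. by rewrite greedy_coloringE /minority_color; case: ifP. Qed.

Lemma greedy_earlier_half v :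
  #|earlier_nbrs v| <= 2 * #|[set u in earlier_nbrs v | g u != g v]|.
Proof.
set N := earlier_nbrs v.
set N0 := [set u in N | g u == 0]; set N1 := [set u in N | g u == 1].
have g01 u : (g u != 0) = (g u == 1) /\ (g u != 1) = (g u == 0).
  by move: (greedy_coloring_le1 u); case: (g u) => [|[|]].
have card_N : #|N| = #|N0| + #|N1|.
  rewrite -(cardsID [set u | g u == 0] N); congr (_ + _); apply: eq_card => u.
    by rewrite !inE andbC.
  by rewrite !inE (g01 u).1 andbC.
rewrite (greedy_coloringE v) -/N -/N0 -/N1 /minority_color card_N mul2n -addnn.
case: ltnP => [lt10 | le01].
  have -> : [set u in N | g u != 1] = N0 by apply/setP => u; rewrite !inE (g01 u).2.
  by rewrite leq_add2l ltnW.
have -> : [set u in N | g u != 0] = N1 by apply/setP => u; rewrite !inE (g01 u).1.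
by rewrite leq_add2r.
Qed.

End EarlierNeighbours.

Section EdgeCounting.

Variables (T : finType) (e : rel T).

Definition edges_with (Q : rel T) : {set {set T}} :=
  [set A | [exists u, exists v, [&& A == [set u; v], e u v & Q u v]]].

(* The edge {u, v} is encoded by the pair (later endpoint, earlier endpoint). *)
Definition earlier_pairs (Q : rel T) : {set T * T} :=
  [set p | (p.2 \in earlier_nbrs e p.1) && Q p.2 p.1].

Lemma covered_edgesE (f : T -> nat) :
  covered_edges e f = edges_with (fun u v => f u != f v).
Proof. by []. Qed.

Lemma edges_withS (Q Q' : rel T) :
  (forall u v, Q u v -> Q' u v) -> edges_with Q \subset edges_with Q'.
Proof.
move=> QQ'; apply/subsetP => A; rewrite !inE.
move=> /existsP [u /existsP [v /and3P [A_uv e_uv Q_uv]]].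
by apply/existsP; exists u; apply/existsP; exists v; rewrite A_uv e_uv QQ'.
Qed.

Lemma pair_set_inj Q :
  {in earlier_pairs Q &, injective (fun p : T * T => [set p.1; p.2])}.
Proof.
move=> [v u] [v' u']; rewrite !inE /= => /andP [/andP [uv _] _] /andP [/andP [uv' _] _].
move=> eq2; have := set21 v u; have := set22 v u; rewrite eq2 !inE.
case/orP => /eqP ? /orP [] /eqP ?; subst; rewrite ?before_irr // in uv uv' *.
by rewrite (before_asym uv) in uv'.
Qed.

Lemma card_earlier_pairs Q :
  #|earlier_pairs Q| = \sum_v #|[set u in earlier_nbrs e v | Q u v]|.
Proof.
under eq_bigr do rewrite -sum1dep_card.
rewrite pair_big_dep sum1dep_card; apply: eq_card => p.
by rewrite [in RHS]inE /earlier_pairs inE andTb.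
Qed.

Hypotheses (e_sym : symmetric e) (e_irr : irreflexive e).

Lemma edges_withE Q :
  symmetric Q -> edges_with Q = (fun p => [set p.1; p.2]) @: earlier_pairs Q.
Proof.
move=> Q_sym; apply/setP => A; apply/idP/imsetP.
  move=> /[!inE] /existsP [u /existsP [v /and3P [/eqP -> e_uv Q_uv]]].
  have /before_total : u != v by apply: contraTneq e_uv => ->; rewrite e_irr.
  case/orP => [uv | vu].
    by exists (v, u); [rewrite !inE /= uv e_sym e_uv | rewrite setUC].
  by exists (u, v); rewrite // !inE /= vu e_uv Q_sym.
move=> [[v u]] /[!inE] /= /andP [/andP [_ e_vu] Q_uv] ->.
by apply/existsP; exists v; apply/existsP; exists u; rewrite eqxx e_vu Q_sym.
Qed.

Lemma card_edges_with Q :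
  symmetric Q -> #|edges_with Q| = \sum_v #|[set u in earlier_nbrs e v | Q u v]|.
Proof.
move=> Q_sym; rewrite edges_withE // card_in_imset ?card_earlier_pairs //.
exact: pair_set_inj.
Qed.

End EdgeCounting.

Lemma feasible_relaxed (T : finType) (e : rel T) (r : nat) (f : T -> nat) :
  (forall v, f v < r) -> feasible e r f.
Proof. by move=> f_lt; apply/forallP => u; apply/forallP => v; rewrite f_lt !implybT. Qed.

Lemma opt_cover_le_edges (T : finType) (e : rel T) (r k : nat) :
  opt_cover e r k <= #|edges_with e (fun _ _ => true)|.
Proof. by apply/bigmax_leqP => f _; apply/subset_leq_card/edges_withS. Qed.

Theorem mainTheorem6 (r k : nat) (T : finType) (e : rel T) :
  2 <= r -> r <= k -> simple_graph e ->
  (forall v, greedy_coloring e v < k) /\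
  feasible e r (greedy_coloring e) /\
  opt_cover e r k <= 2 * ncovered e (greedy_coloring e).
Proof.
move=> r_ge2 r_le_k [e_sym e_irr]; set g := greedy_coloring e.
have g_relaxed v : g v < r := leq_ltn_trans (greedy_coloring_le1 e v) r_ge2.
split; first by move=> v; apply: leq_trans (g_relaxed v) r_le_k.
split; first exact: feasible_relaxed.
apply: leq_trans (opt_cover_le_edges e r k) _.
rewrite /ncovered covered_edgesE !card_edges_with //; last by move=> u v; rewrite eq_sym.
rewrite big_distrr leq_sum // => v _.
by rewrite setIdE setIT greedy_earlier_half.
Qed.
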